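(* Let $P_p, P_e \in \mathbb{R}^{n\times n}$ be row-stochastic matrices, viewed as the transition matrices of two independent discrete-time Markov chains (a pursuer and an evader) on the node set $\{1,\dots,n\}$. The following statements are equivalent: (i) for every pair of nodes $i,j$, the meeting time $m_{i,j}$ is finite; (ii) for every pair of nodes $i,j$, there exist a node $k$ and a length $\ell\ge 1$ such that there is a walk of length $\ell$ from $i$ to $k$ for $P_p$ and a walk of length $\ell$ from $j$ to $k$ for $P_e$; (iii) for every pair of nodes $i,j$, there exists a walk of length at least $1$ for the stochastic matrix $P_e\otimes P_p$ from the Kronecker-graph node $(i,j)$ to a node $(k,k)$ for some $k\in\{1,\dots,n\}$; (iv) the row-substochastic matrix $(P_e\otimes P_p)E$ has spectral radius strictly less than $1$, where $E = I_{n^2} - \mathrm{diag}(\mathrm{vec}(I_n))$. Moreover, when these hold, the matrix $M=[m_{i,j}]$ of meeting times satisfies $$\mathrm{vec}(M) = \big(I_{n^2} - (P_e\otimes P_p)E\big)^{-1}\mathbf{1}_{n^2}.$$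
   Context: Let $X^{(p)}_t, X^{(e)}_t\in\{1,\dots,n\}$, $t=0,1,2,\dots$, be the positions of the pursuer and evader, evolving as independent Markov chains with transition matrices $P_p=[p^{(p)}_{i,j}]$ and $P_e=[p^{(e)}_{i,j}]$ (typically supported on the edges of a strongly connected digraph on $\{1,\dots,n\}$). The first meeting time from $i,j$ is $T_{i,j}=\min\{t\ge 1 : X^{(p)}_t = X^{(e)}_t\}$ given $X^{(p)}_0=i$, $X^{(e)}_0=j$ (with $T_{i,j}=\infty$ if they never meet; if $i=j$ this is the first time $t\ge1$ they meet again), and the meeting time is $m_{i,j}=\mathbb{E}[T_{i,j}]$. A walk of length $\ell$ from $i_1$ to $i_{\ell+1}$ for a matrix $P=[p_{a,b}]$ is a sequence of nodes $i_1,\dots,i_{\ell+1}$ with $p_{i_k,i_{k+1}}>0$ for $1\le k\le \ell$. $\otimes$ is the Kronecker product; the Kronecker graph has node set $\{1,\dots,n\}^2$, with node $(i,j)$ (pursuer at $i$, evader at $j$) corresponding to index $(j-1)n+i$ of $P_e\otimes P_p$. $\mathrm{vec}$ stacks the columns of a matrix into a vector (so $m_{i,j}$ is the $((j-1)n+i)$-th entry of $\mathrm{vec}(M)$), $\mathrm{diag}(v)$ is the diagonal matrix with diagonal $v$, and $\mathbf{1}_{N}$ is the all-ones vector in $\mathbb{R}^N$. *)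

(* Nodes are 0-indexed: {0,...,n-1}.
   Matrices are functions nat -> nat -> R, only entries with indices < size
   are relevant. *)
From Stdlib Require Import Reals Arith.
Open Scope R_scope.

Fixpoint rsum (m : nat) (f : nat -> R) : R :=
  match m with
  | O => 0
  | S m' => rsum m' f + f m'
  end.

Definition row_stochastic (n : nat) (P : nat -> nat -> R) : Prop :=
  (forall i j, (i < n)%nat -> (j < n)%nat -> 0 <= P i j) /\
  (forall i, (i < n)%nat -> rsum n (fun j => P i j) = 1).

Definition walk (N : nat) (P : nat -> nat -> R) (l a b : nat) : Prop :=
  exists s : nat -> nat,
    s O = a /\ s l = b /\
    (forall t, (t <= l)%nat -> (s t < N)%nat) /\
    (forall t, (t < l)%nat -> 0 < P (s t) (s (S t))).

(* meet_prob n Pp Pe t i j = Prob(T_{i,j} = t), the law of the first meeting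
   time (t >= 1) of the independent chains started at X^p_0 = i, X^e_0 = j,
   obtained from the Markov property by conditioning on the first step
   (X^p_1, X^e_1) = (k, l):  T = 1 if k = l, and T = 1 + T_{k,l} otherwise. *)
Fixpoint meet_prob (n : nat) (Pp Pe : nat -> nat -> R) (t i j : nat) : R :=
  match t with
  | O => 0
  | S t' =>
      rsum n (fun k => rsum n (fun l =>
        Pp i k * Pe j l *
        (if Nat.eqb k l then (if Nat.eqb t' O then 1 else 0)
         else meet_prob n Pp Pe t' k l)))
  end.

(* m_{i,j} = E[T_{i,j}] is finite: T_{i,j} < oo almost surely and
   sum_t t Prob(T_{i,j} = t) converges *)
Definition meeting_time_finite (n : nat) (Pp Pe : nat -> nat -> R) (i j : nat) : Prop :=
  infinite_sum (fun t => meet_prob n Pp Pe t i j) 1 /\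
  exists m, infinite_sum (fun t => INR t * meet_prob n Pp Pe t i j) m.

Definition meeting_time_is (n : nat) (Pp Pe : nat -> nat -> R) (i j : nat) (m : R) : Prop :=
  infinite_sum (fun t => meet_prob n Pp Pe t i j) 1 /\
  infinite_sum (fun t => INR t * meet_prob n Pp Pe t i j) m.

(* For A = Pe, B = Pp, index j*n+i is the Kronecker-graph node (i,j)
   (pursuer at i, evader at j), i.e. (j-1)n+i in 1-indexed form. *)
Definition kron (n : nat) (A B : nat -> nat -> R) (r c : nat) : R :=
  A (r / n)%nat (c / n)%nat * B (r mod n)%nat (c mod n)%nat.

(* E = I_{n^2} - diag(vec(I_n)) : diagonal, entry at index j*n+i is
   1 - [i = j] *)
Definition Emat (n : nat) (r c : nat) : R :=
  if Nat.eqb r c then (1 - (if Nat.eqb (r mod n) (r / n) then 1 else 0)) else 0.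

Definition mxmul (N : nat) (A B : nat -> nat -> R) (r c : nat) : R :=
  rsum N (fun k => A r k * B k c).

Definition idmx (r c : nat) : R := if Nat.eqb r c then 1 else 0.

Definition mxsub (A B : nat -> nat -> R) (r c : nat) : R := A r c - B r c.

(* lambda = a + i b is a (complex) eigenvalue of the real N x N matrix A:
   there is a nonzero complex vector x + i y with A (x + i y) = lambda (x + i y) *)
Definition is_eigenvalue (N : nat) (A : nat -> nat -> R) (a b : R) : Prop :=
  exists x y : nat -> R,
    (exists r, (r < N)%nat /\ (x r <> 0 \/ y r <> 0)) /\
    (forall r, (r < N)%nat ->
       rsum N (fun c => A r c * x c) = a * x r - b * y r /\
       rsum N (fun c => A r c * y c) = b * x r + a * y r).

(* spectral radius rho(A) = max |lambda| over the (finite) spectrum;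
   rho(A) < 1  iff  every eigenvalue has modulus < 1 *)
Definition spectral_radius_lt_1 (N : nat) (A : nat -> nat -> R) : Prop :=
  forall a b, is_eigenvalue N A a b -> sqrt (a * a + b * b) < 1.

Definition is_inverse (N : nat) (B A : nat -> nat -> R) : Prop :=
  forall r c, (r < N)%nat -> (c < N)%nat ->
    mxmul N B A r c = idmx r c /\ mxmul N A B r c = idmx r c.

From Stdlib Require Import Reals Arith Lia Lra ClassicalEpsilon.
Open Scope R_scope.

(* Killing the pair chain on the diagonal gives the substochastic matrix
   A = (Pe (x) Pp) E, whose survival vector g_t = A^t 1 satisfies
   Prob(T = t + 1) = g_t - g_{t+1}, hence E[T] = sum_t g_t.  A walk to the
   diagonal makes every g_t(r) drop below 1 eventually, and substochasticity
   upgrades this to geometric decay g_{t+L} <= q g_t.  Then the Neumann series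
   sum_t A^t converges to (I - A)^-1, E[T] is its row sum, and no eigenvalue
   has modulus >= 1: by Jensen the squared modulus of an eigenvector would be
   subinvariant, contradicting the decay at its maximum.  Without such a walk
   the pair never meets, g_t = 1 forever, and lim g is a fixed vector of A. *)

(** * Finite sums *)

Lemma rsum_ext m f g : (forall k, (k < m)%nat -> f k = g k) -> rsum m f = rsum m g.
Proof.
  induction m as [|m IH]; intros H; simpl; auto.
  rewrite IH by (intros; apply H; lia). now rewrite H by lia.
Qed.

Lemma rsum_plus m f g : rsum m (fun k => f k + g k) = rsum m f + rsum m g.
Proof. induction m; simpl; [lra | rewrite IHm; lra]. Qed.

Lemma rsum_minus m f g : rsum m (fun k => f k - g k) = rsum m f - rsum m g.
Proof. induction m; simpl; [lra | rewrite IHm; lra]. Qed.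

Lemma rsum_scal_l m c f : rsum m (fun k => c * f k) = c * rsum m f.
Proof. induction m; simpl; [lra | rewrite IHm; lra]. Qed.

Lemma rsum_scal_r m c f : rsum m (fun k => f k * c) = rsum m f * c.
Proof. induction m; simpl; [lra | rewrite IHm; lra]. Qed.

Lemma rsum_const m c : rsum m (fun _ => c) = INR m * c.
Proof. induction m; simpl rsum; [simpl; lra | rewrite IHm, S_INR; lra]. Qed.

Lemma rsum_zero m : rsum m (fun _ => 0) = 0.
Proof. rewrite rsum_const. lra. Qed.

Lemma rsum_le m f g : (forall k, (k < m)%nat -> f k <= g k) -> rsum m f <= rsum m g.
Proof.
  induction m as [|m IH]; intros H; simpl; [lra|].
  assert (f m <= g m) by (apply H; lia).
  assert (rsum m f <= rsum m g) by (apply IH; intros; apply H; lia).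
  lra.
Qed.

Lemma rsum_nonneg m f : (forall k, (k < m)%nat -> 0 <= f k) -> 0 <= rsum m f.
Proof. intros H. rewrite <- (rsum_zero m). apply rsum_le. auto. Qed.

Lemma rsum_swap m p (f : nat -> nat -> R) :
  rsum m (fun a => rsum p (fun b => f a b)) = rsum p (fun b => rsum m (fun a => f a b)).
Proof.
  induction m; simpl; [now rewrite rsum_zero|].
  now rewrite IHm, <- rsum_plus.
Qed.

Lemma rsum_ge_term m f c :
  (forall k, (k < m)%nat -> 0 <= f k) -> (c < m)%nat -> f c <= rsum m f.
Proof.
  induction m as [|m IH]; intros H Hc; [lia|simpl].
  assert (0 <= f m) by (apply H; lia).
  destruct (Nat.eq_dec c m) as [->|Hne].
  - assert (0 <= rsum m f) by (apply rsum_nonneg; intros; apply H; lia). lra.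
  - assert (f c <= rsum m f) by (apply IH; [intros; apply H|]; lia). lra.
Qed.

Lemma rsum_lt m f g c :
  (forall k, (k < m)%nat -> f k <= g k) -> (c < m)%nat -> f c < g c -> rsum m f < rsum m g.
Proof.
  intros H Hc Hlt.
  assert (g c - f c <= rsum m (fun k => g k - f k)).
  { apply (rsum_ge_term m (fun k => g k - f k)); auto.
    intros k Hk. specialize (H k Hk). lra. }
  rewrite rsum_minus in H0. lra.
Qed.

Lemma rsum_nonzero_term m f : rsum m f <> 0 -> exists c, (c < m)%nat /\ f c <> 0.
Proof.
  induction m as [|m IH]; simpl; intros H; [lra|].
  destruct (Req_dec (f m) 0) as [E|E].
  - destruct IH as [c [Hc Hf]]; [lra|]. exists c. split; auto; lia.
  - exists m. split; auto.
Qed.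

Lemma rsum_split a b f : rsum (a + b) f = rsum a f + rsum b (fun s => f (a + s)%nat).
Proof.
  induction b; simpl; [rewrite Nat.add_0_r; lra|].
  rewrite Nat.add_succ_r. simpl. rewrite IHb. lra.
Qed.

Lemma rsum_blocks a b f : rsum (a * b) f = rsum a (fun x => rsum b (fun y => f (x * b + y)%nat)).
Proof.
  induction a; simpl; auto.
  replace (b + a * b)%nat with (a * b + b)%nat by lia.
  now rewrite rsum_split, IHa.
Qed.

Lemma rsum_succ_l T f : rsum (S T) f = f 0%nat + rsum T (fun t => f (S t)).
Proof. induction T; simpl in *; [lra | rewrite IHT; lra]. Qed.

Lemma rsum_le_len f a b : (forall t, 0 <= f t) -> (a <= b)%nat -> rsum a f <= rsum b f.
Proof.
  intros H Hab. replace b with (a + (b - a))%nat by lia. rewrite rsum_split.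
  assert (0 <= rsum (b - a) (fun s => f (a + s)%nat)) by (apply rsum_nonneg; auto).
  lra.
Qed.

Lemma sum_f_R0_rsum f T : sum_f_R0 f T = rsum (S T) f.
Proof. induction T; simpl in *; [lra | now rewrite IHT]. Qed.

Lemma idmx_sym r c : idmx r c = idmx c r.
Proof. unfold idmx. now rewrite Nat.eqb_sym. Qed.

Lemma rsum_idmx_r m c f : (c < m)%nat -> rsum m (fun k => f k * idmx k c) = f c.
Proof.
  induction m as [|m IH]; intros Hc; [lia|simpl].
  unfold idmx at 2. destruct (Nat.eqb_spec m c) as [->|Hne].
  - rewrite (rsum_ext _ _ (fun _ => 0)), rsum_zero; [lra|].
    intros k Hk. unfold idmx. destruct (Nat.eqb_spec k c); [lia|ring].
  - rewrite IH by lia. ring.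
Qed.

Lemma rsum_idmx_l m r f : (r < m)%nat -> rsum m (fun k => idmx r k * f k) = f r.
Proof.
  intros Hr. rewrite <- (rsum_idmx_r m r f Hr).
  apply rsum_ext. intros k _. rewrite idmx_sym. ring.
Qed.

Lemma rsum_weighted_sq_le m w x :
  (forall k, (k < m)%nat -> 0 <= w k) -> rsum m w <= 1 ->
  (rsum m (fun k => w k * x k)) ^ 2 <= rsum m (fun k => w k * (x k * x k)).
Proof.
  intros Hw H1. set (s := rsum m (fun k => w k * x k)).
  assert (Hvar : 0 <= rsum m (fun k => w k * ((x k - s) * (x k - s)))).
  { apply rsum_nonneg. intros k Hk. apply Rmult_le_pos; [auto | apply Rle_0_sqr]. }
  replace (rsum m (fun k => w k * ((x k - s) * (x k - s)))) with
    (rsum m (fun k => w k * (x k * x k)) - 2 * s * rsum m (fun k => w k * x k)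
     + s * s * rsum m w) in Hvar.
  2:{ rewrite <- !rsum_scal_l, <- rsum_minus, <- rsum_plus.
      apply rsum_ext. intros. ring. }
  fold s in Hvar.
  assert (0 <= s * s * (1 - rsum m w)) by (apply Rmult_le_pos; [apply Rle_0_sqr | lra]).
  simpl. nra.
Qed.

Lemma exists_argmax N (f : nat -> R) :
  (0 < N)%nat -> exists r, (r < N)%nat /\ forall k, (k < N)%nat -> f k <= f r.
Proof.
  induction N as [|N IH]; intros HN; [lia|].
  destruct (Nat.eq_dec N 0) as [->|HN0].
  - exists 0%nat. split; [lia|]. intros k Hk. replace k with 0%nat by lia. lra.
  - destruct IH as [r [Hr Hmax]]; [lia|].
    destruct (Rle_dec (f r) (f N)).
    + exists N. split; [lia|]. intros k Hk.
      destruct (Nat.eq_dec k N) as [->|]; [lra|].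
      assert (f k <= f r) by (apply Hmax; lia). lra.
    + exists r. split; [lia|]. intros k Hk.
      destruct (Nat.eq_dec k N) as [->|]; [lra | apply Hmax; lia].
Qed.
(** * Sequences and series *)

Lemma Un_cv_const c : Un_cv (fun _ => c) c.
Proof. intros e He. exists 0%nat. intros. unfold Rdist. rewrite Rminus_diag, Rabs_R0. lra. Qed.

Lemma Un_cv_ext u v l : (forall T, u T = v T) -> Un_cv u l -> Un_cv v l.
Proof.
  intros E H e He. destruct (H e He) as [T0 HT0].
  exists T0. intros. rewrite <- E. auto.
Qed.

Lemma Un_cv_succ u l : Un_cv u l -> Un_cv (fun T => u (S T)) l.
Proof. intros H e He. destruct (H e He) as [T0 HT0]. exists T0. intros. apply HT0. lia. Qed.

Lemma Un_cv_rsum m (u : nat -> nat -> R) l :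
  (forall k, (k < m)%nat -> Un_cv (u k) (l k)) ->
  Un_cv (fun T => rsum m (fun k => u k T)) (rsum m l).
Proof.
  induction m; intros H; simpl; [apply Un_cv_const|].
  apply CV_plus; [apply IHm; intros|]; apply H; lia.
Qed.

(* Partial sums have [T] terms, whereas [infinite_sum] uses [sum_f_R0 f T]. *)
Definition sums (f : nat -> R) (l : R) : Prop := Un_cv (fun T => rsum T f) l.

Lemma sums_succ f l : sums f l -> sums (fun t => f (S t)) (l - f 0%nat).
Proof.
  intros H. apply (Un_cv_ext (fun T => rsum (S T) f - f 0%nat)).
  - intros T. rewrite rsum_succ_l. lra.
  - apply CV_minus; [exact (Un_cv_succ _ _ H) | apply Un_cv_const].
Qed.

Lemma sums_rsum_lin m (w : nat -> R) (f : nat -> nat -> R) l :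
  (forall k, (k < m)%nat -> sums (f k) (l k)) ->
  sums (fun t => rsum m (fun k => w k * f k t)) (rsum m (fun k => w k * l k)).
Proof.
  intros H. apply (Un_cv_ext (fun T => rsum m (fun k => w k * rsum T (f k)))).
  - intros T. rewrite rsum_swap. apply rsum_ext. intros k _. now rewrite rsum_scal_l.
  - apply Un_cv_rsum. intros k Hk.
    apply (CV_mult (fun _ => w k)); [apply Un_cv_const | exact (H k Hk)].
Qed.

Lemma sums_of_bounded_nonneg f B :
  (forall t, 0 <= f t) -> (forall T, rsum T f <= B) -> exists l, sums f l.
Proof.
  intros H0 HB. destruct (growing_cv (fun T => rsum T f)) as [l Hl].
  - intros T. simpl. specialize (H0 T). lra.
  - exists B. intros x [T ->]. auto.
  - exists l. exact Hl.
Qed.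

(* A nonincreasing summable sequence is o(1/T): the [T - T/2] terms after
   index [T/2] each dominate [u T] and sum to a tail of the series. *)
Lemma Un_cv_INR_mult_0 u l :
  (forall T, 0 <= u T) -> (forall T, u (S T) <= u T) -> sums u l ->
  Un_cv (fun T => INR T * u T) 0.
Proof.
  intros H0 Hdec Hs e He.
  assert (Hanti : forall a b, (a <= b)%nat -> u b <= u a).
  { intros a b Hab. induction Hab; [lra|]. specialize (Hdec m). lra. }
  destruct (Hs (e / 4)) as [T0 HT0]; [lra|].
  exists (2 * T0)%nat. intros T HT. set (U := (T / 2)%nat).
  assert (HU : (T0 <= U)%nat) by (unfold U; apply Nat.div_le_lower_bound; lia).
  assert (HUT : (2 * U <= T)%nat) by (unfold U; apply Nat.Div0.mul_div_le).
  pose proof (HT0 T ltac:(lia)) as A1. pose proof (HT0 U HU) as A2.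
  unfold Rdist in A1, A2. apply Rabs_def2 in A1. apply Rabs_def2 in A2.
  assert (Htail : INR (T - U) * u T <= rsum T u - rsum U u).
  { replace (rsum T u) with (rsum (U + (T - U)) u) by (f_equal; lia).
    rewrite rsum_split, <- rsum_const.
    assert (rsum (T - U) (fun _ => u T) <= rsum (T - U) (fun s => u (U + s)%nat))
      by (apply rsum_le; intros; apply Hanti; lia).
    lra. }
  assert (HT2 : INR T <= 2 * INR (T - U)).
  { replace (2 * INR (T - U)) with (INR (2 * (T - U))) by (rewrite mult_INR; simpl; ring).
    apply le_INR. lia. }
  pose proof (H0 T). pose proof (pos_INR T).
  unfold Rdist. rewrite Rminus_0_r, Rabs_right by (apply Rle_ge, Rmult_le_pos; auto).
  apply Rle_lt_trans with (2 * (INR (T - U) * u T)); [|lra].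
  rewrite <- Rmult_assoc. apply Rmult_le_compat_r; auto.
Qed.

(** * Powers of a substochastic matrix *)

Section Substochastic.

Variable N : nat.
Variable A : nat -> nat -> R.
Hypothesis A_nonneg : forall r c, (r < N)%nat -> (c < N)%nat -> 0 <= A r c.
Hypothesis A_rowsum_le1 : forall r, (r < N)%nat -> rsum N (fun c => A r c) <= 1.

Definition mxapp (v : nat -> R) (r : nat) : R := rsum N (fun c => A r c * v c).

Fixpoint mxpow_app (t : nat) (v : nat -> R) : nat -> R :=
  match t with O => v | S t' => mxapp (mxpow_app t' v) end.

(* Row sums of [A^t]: the mass still alive after [t] steps from [r]. *)
Definition survival (t : nat) : nat -> R := mxpow_app t (fun _ => 1).

Definition mxpow (t r c : nat) : R := mxpow_app t (fun k => idmx k c) r.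

Lemma mxapp_ext u v r : (forall c, (c < N)%nat -> u c = v c) -> mxapp u r = mxapp v r.
Proof. intros H. apply rsum_ext. intros c Hc. now rewrite H. Qed.

Lemma mxapp_le u v r :
  (r < N)%nat -> (forall c, (c < N)%nat -> u c <= v c) -> mxapp u r <= mxapp v r.
Proof. intros Hr H. apply rsum_le. intros c Hc. apply Rmult_le_compat_l; auto. Qed.

Lemma mxpow_app_ext t u v r :
  (r < N)%nat -> (forall c, (c < N)%nat -> u c = v c) -> mxpow_app t u r = mxpow_app t v r.
Proof. revert r. induction t; intros r Hr H; simpl; auto. apply mxapp_ext. auto. Qed.

Lemma mxpow_app_le t u v r :
  (r < N)%nat -> (forall c, (c < N)%nat -> u c <= v c) -> mxpow_app t u r <= mxpow_app t v r.
Proof. revert r. induction t; intros r Hr H; simpl; auto. apply mxapp_le; auto. Qed.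

Lemma mxpow_app_nonneg t v r :
  (r < N)%nat -> (forall c, (c < N)%nat -> 0 <= v c) -> 0 <= mxpow_app t v r.
Proof.
  revert r. induction t; intros r Hr H; simpl; auto.
  apply rsum_nonneg. intros c Hc. apply Rmult_le_pos; auto.
Qed.

Lemma mxpow_app_scal t a v r : mxpow_app t (fun c => a * v c) r = a * mxpow_app t v r.
Proof.
  revert r. induction t; intros r; simpl; auto.
  rewrite (mxapp_ext _ (fun c => a * mxpow_app t v c)) by auto.
  unfold mxapp. rewrite <- rsum_scal_l. apply rsum_ext. intros. ring.
Qed.

Lemma mxpow_app_rsum t m (f : nat -> nat -> R) r :
  mxpow_app t (fun k => rsum m (fun c => f c k)) r = rsum m (fun c => mxpow_app t (f c) r).
Proof.
  revert r. induction t; intros r; simpl; auto.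
  rewrite (mxapp_ext _ (fun k => rsum m (fun c => mxpow_app t (f c) k))) by auto.
  unfold mxapp. rewrite <- rsum_swap. apply rsum_ext. intros c _. now rewrite <- rsum_scal_l.
Qed.

Lemma mxpow_app_add t s v r : mxpow_app (t + s) v r = mxpow_app t (mxpow_app s v) r.
Proof. revert r. induction t; intros r; simpl; auto. apply mxapp_ext. auto. Qed.

Lemma survival_nonneg t r : (r < N)%nat -> 0 <= survival t r.
Proof. intros Hr. apply mxpow_app_nonneg; auto. intros. lra. Qed.

Lemma survival_succ_le t r : (r < N)%nat -> survival (S t) r <= survival t r.
Proof.
  revert r. induction t; intros r Hr.
  - unfold survival, mxpow_app, mxapp.
    rewrite (rsum_ext _ _ (fun c => A r c)) by (intros; ring). auto.
  - apply mxapp_le; auto.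
Qed.

Lemma survival_le t t' r : (r < N)%nat -> (t <= t')%nat -> survival t' r <= survival t r.
Proof.
  intros Hr H. induction H; [lra|].
  pose proof (survival_succ_le m r Hr). lra.
Qed.

Lemma survival_le1 t r : (r < N)%nat -> survival t r <= 1.
Proof. intros Hr. apply (survival_le 0 t r Hr). lia. Qed.

Lemma mxpow_le_survival t r c : (r < N)%nat -> 0 <= mxpow t r c <= survival t r.
Proof.
  intros Hr. assert (Hid : forall k, 0 <= idmx k c <= 1)
    by (intros k; unfold idmx; destruct (Nat.eqb k c); lra).
  split; [apply mxpow_app_nonneg | apply mxpow_app_le]; auto; intros; apply Hid.
Qed.

Lemma mxpow_succ_r t r c : (r < N)%nat -> (c < N)%nat ->
  rsum N (fun k => mxpow t r k * A k c) = mxpow (S t) r c.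
Proof.
  revert r. induction t; intros r Hr Hc.
  - unfold mxpow. simpl. rewrite rsum_idmx_l by auto. unfold mxapp. now rewrite rsum_idmx_r.
  - change (mxpow (S (S t)) r c) with (rsum N (fun m => A r m * mxpow (S t) m c)).
    change (fun k => mxpow (S t) r k * A k c)
      with (fun k => rsum N (fun m => A r m * mxpow t m k) * A k c).
    rewrite (rsum_ext N _ (fun k => rsum N (fun m => A r m * (mxpow t m k * A k c)))).
    2:{ intros k _. rewrite <- rsum_scal_r. apply rsum_ext. intros. ring. }
    rewrite rsum_swap. apply rsum_ext. intros m Hm. now rewrite rsum_scal_l, IHt.
Qed.

Lemma rsum_mxpow t r : (r < N)%nat -> rsum N (fun c => mxpow t r c) = survival t r.
Proof.
  intros Hr. unfold mxpow, survival. rewrite <- mxpow_app_rsum.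
  apply mxpow_app_ext; auto. intros k Hk.
  rewrite (rsum_ext _ _ (fun c => idmx k c * 1)) by (intros; ring).
  now rewrite rsum_idmx_l.
Qed.

Lemma uniform_decay_of_decay :
  (forall r, (r < N)%nat -> exists t, survival t r < 1) ->
  exists L q, 0 <= q < 1 /\ forall r, (r < N)%nat -> survival L r <= q.
Proof.
  intros Hdec.
  assert (H : forall m, (m <= N)%nat ->
    exists L q, 0 <= q < 1 /\ forall r, (r < m)%nat -> survival L r <= q).
  { induction m as [|m IH]; intros Hm.
    - exists 0%nat, 0. split; [lra | intros; lia].
    - destruct IH as [L1 [q1 [Hq1 H1]]]; [lia|].
      destruct (Hdec m) as [tm Htm]; [lia|].
      exists (Nat.max L1 tm), (Rmax q1 (survival tm m)). split.
      + split; [apply Rle_trans with q1; [lra | apply Rmax_l] | apply Rmax_lub_lt; lra].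
      + intros r Hr. destruct (Nat.eq_dec r m) as [->|Hne].
        * apply Rle_trans with (survival tm m); [apply survival_le; lia | apply Rmax_r].
        * apply Rle_trans with (survival L1 r); [apply survival_le; lia|].
          apply Rle_trans with q1; [apply H1; lia | apply Rmax_l]. }
  exact (H N (le_n N)).
Qed.

(* Jensen's inequality for the sub-probability weights [A r]. *)
Lemma eigen_modulus_le_mxapp a b x y r :
  1 <= a * a + b * b -> (r < N)%nat ->
  mxapp x r = a * x r - b * y r -> mxapp y r = b * x r + a * y r ->
  x r * x r + y r * y r <= mxapp (fun c => x c * x c + y c * y c) r.
Proof.
  intros Hab Hr Ex Ey.
  assert (Bx := rsum_weighted_sq_le N (A r) x (fun k => A_nonneg r k Hr) (A_rowsum_le1 r Hr)).
  assert (By := rsum_weighted_sq_le N (A r) y (fun k => A_nonneg r k Hr) (A_rowsum_le1 r Hr)).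
  fold (mxapp x r) in Bx. fold (mxapp y r) in By. rewrite Ex in Bx. rewrite Ey in By.
  unfold mxapp. rewrite (rsum_ext _ _ (fun c => A r c * (x c * x c) + A r c * (y c * y c)))
    by (intros; ring).
  rewrite rsum_plus.
  assert (0 <= x r * x r + y r * y r) by (pose proof (Rle_0_sqr (x r)); pose proof (Rle_0_sqr (y r)); unfold Rsqr in *; lra).
  nra.
Qed.

Section UniformDecay.

Variable L : nat.
Variable q : R.
Hypothesis q_bounds : 0 <= q < 1.
Hypothesis survival_L_le : forall r, (r < N)%nat -> survival L r <= q.

Lemma survival_add_L_le t r : (r < N)%nat -> survival (t + L) r <= q * survival t r.
Proof.
  intros Hr. unfold survival at 1. rewrite mxpow_app_add.
  apply Rle_trans with (mxpow_app t (fun c => q * 1) r).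
  - apply mxpow_app_le; auto. intros c Hc. rewrite Rmult_1_r. now apply survival_L_le.
  - rewrite mxpow_app_scal. unfold survival. lra.
Qed.

Lemma survival_mul_L_le k r : (r < N)%nat -> survival (k * L) r <= q ^ k.
Proof.
  intros Hr. induction k; simpl; [apply survival_le1; auto|].
  replace (L + k * L)%nat with (k * L + L)%nat by lia.
  pose proof (survival_add_L_le (k * L) r Hr). pose proof (survival_nonneg (k * L) r Hr).
  nra.
Qed.

Lemma decay_period_pos : (0 < N)%nat -> (0 < L)%nat.
Proof.
  intros HN. destruct L; [|lia].
  pose proof (survival_L_le 0 HN). unfold survival in *. simpl in *. lra.
Qed.

Lemma survival_cv_0 r : (r < N)%nat -> Un_cv (fun t => survival t r) 0.
Proof.
  intros Hr e He. pose proof (decay_period_pos ltac:(lia)).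
  destruct (pow_lt_1_zero q ltac:(rewrite Rabs_right; lra) e He) as [K HK].
  exists (K * L)%nat. intros T HT. unfold Rdist. rewrite Rminus_0_r.
  rewrite Rabs_right by (apply Rle_ge, survival_nonneg; auto).
  apply Rle_lt_trans with (survival (K * L) r); [apply survival_le; auto|].
  apply Rle_lt_trans with (q ^ K); [apply survival_mul_L_le; auto|].
  specialize (HK K (le_n K)). rewrite Rabs_right in HK; auto. apply Rle_ge, pow_le. lra.
Qed.

Lemma survival_partial_sum_le r T :
  (r < N)%nat -> rsum T (fun t => survival t r) <= INR L / (1 - q).
Proof.
  intros Hr. pose proof (decay_period_pos ltac:(lia)).
  apply Rle_trans with (rsum (T * L) (fun t => survival t r)).
  { apply rsum_le_len; [intros; apply survival_nonneg; auto | nia]. }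
  rewrite rsum_blocks.
  apply Rle_trans with (rsum T (fun k => INR L * q ^ k)).
  { apply rsum_le. intros k Hk. rewrite <- rsum_const. apply rsum_le. intros t Ht.
    apply Rle_trans with (survival (k * L) r); [apply survival_le; auto; lia|].
    apply survival_mul_L_le; auto. }
  rewrite rsum_scal_l. unfold Rdiv. apply Rmult_le_compat_l; [apply pos_INR|].
  assert (Hgeom : rsum T (fun k => q ^ k) * (1 - q) = 1 - q ^ T).
  { induction T; simpl; [lra|]. rewrite Rmult_plus_distr_r, IHT. ring. }
  assert (0 <= q ^ T) by (apply pow_le; lra).
  apply Rmult_le_reg_r with (1 - q); [lra|]. rewrite Rinv_l by lra.
  change (rsum T (pow q)) with (rsum T (fun k => q ^ k)). lra.
Qed.

(* Entries of [sum_t A^t], an arbitrary value where the series diverges. *)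
Definition neumann (r c : nat) : R :=
  epsilon (inhabits 0) (fun l => sums (fun t => mxpow t r c) l).

Lemma mxpow_sums r c : (r < N)%nat -> sums (fun t => mxpow t r c) (neumann r c).
Proof.
  intros Hr. unfold neumann. apply epsilon_spec.
  apply (sums_of_bounded_nonneg _ (INR L / (1 - q))).
  - intros. apply mxpow_le_survival; auto.
  - intros T. apply Rle_trans with (rsum T (fun t => survival t r)).
    + apply rsum_le. intros. apply mxpow_le_survival; auto.
    + apply survival_partial_sum_le; auto.
Qed.

Lemma neumann_mul_l r c : (r < N)%nat ->
  rsum N (fun k => A r k * neumann k c) = neumann r c - idmx r c.
Proof.
  intros Hr. apply (UL_sequence (fun T => rsum T (fun t => mxpow (S t) r c))).
  - exact (sums_rsum_lin N (A r) (fun k t => mxpow t k c) _ (fun k Hk => mxpow_sums k c Hk)).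
  - exact (sums_succ _ _ (mxpow_sums r c Hr)).
Qed.

Lemma neumann_mul_r r c : (r < N)%nat -> (c < N)%nat ->
  rsum N (fun k => neumann r k * A k c) = neumann r c - idmx r c.
Proof.
  intros Hr Hc. apply (UL_sequence (fun T => rsum T (fun t => mxpow (S t) r c))).
  - apply (Un_cv_ext (fun T => rsum T (fun t => rsum N (fun k => A k c * mxpow t r k)))).
    + intros T. apply rsum_ext. intros t _. rewrite <- mxpow_succ_r by auto.
      apply rsum_ext. intros. ring.
    + rewrite (rsum_ext _ _ (fun k => A k c * neumann r k)) by (intros; ring).
      apply sums_rsum_lin. intros. apply mxpow_sums; auto.
  - exact (sums_succ _ _ (mxpow_sums r c Hr)).
Qed.

Lemma neumann_inverse : is_inverse N neumann (mxsub idmx A).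
Proof.
  intros r c Hr Hc. unfold mxmul, mxsub. split.
  - rewrite (rsum_ext _ _ (fun k => neumann r k * idmx k c - neumann r k * A k c))
      by (intros; ring).
    rewrite rsum_minus, rsum_idmx_r, neumann_mul_r by auto. ring.
  - rewrite (rsum_ext _ _ (fun k => idmx r k * neumann k c - A r k * neumann k c))
      by (intros; ring).
    rewrite rsum_minus, rsum_idmx_l, neumann_mul_l by auto. ring.
Qed.

Lemma survival_sums_neumann_rowsum r : (r < N)%nat ->
  sums (fun t => survival t r) (rsum N (fun c => neumann r c)).
Proof.
  intros Hr. apply (Un_cv_ext (fun T => rsum T (fun t => rsum N (fun c => 1 * mxpow t r c)))).
  - intros T. apply rsum_ext. intros t _. rewrite <- rsum_mxpow by auto.
    apply rsum_ext. intros. ring.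
  - rewrite (rsum_ext _ _ (fun c => 1 * neumann r c)) by (intros; ring).
    apply sums_rsum_lin. intros. apply mxpow_sums; auto.
Qed.

Lemma spectral_radius_lt_1_of_decay : spectral_radius_lt_1 N A.
Proof.
  intros a b [x [y [[r0 [Hr0 Hnz]] Hev]]].
  destruct (Rlt_dec (a * a + b * b) 1) as [Hlt|Hge].
  { rewrite <- sqrt_1. apply sqrt_lt_1_alt. split; [nra | lra]. }
  exfalso. set (m := fun c => x c * x c + y c * y c).
  assert (Hm0 : forall c, 0 <= m c)
    by (intros c; unfold m; pose proof (Rle_0_sqr (x c)); pose proof (Rle_0_sqr (y c)); unfold Rsqr in *; lra).
  assert (Hsub : forall t r, (r < N)%nat -> m r <= mxpow_app t m r).
  { induction t; intros r Hr; simpl; [lra|].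
    apply Rle_trans with (mxapp m r).
    - destruct (Hev r Hr) as [Ex Ey]. apply eigen_modulus_le_mxapp with a b; auto; lra.
    - apply mxapp_le; auto. }
  destruct (exists_argmax N m) as [rs [Hrs Hmax]]; [lia|].
  assert (HM : 0 < m rs).
  { apply Rlt_le_trans with (m r0); [|apply Hmax; auto]. unfold m.
    pose proof (Rle_0_sqr (x r0)). pose proof (Rle_0_sqr (y r0)). unfold Rsqr in *.
    destruct Hnz as [Hx|Hy]; [pose proof (Rsqr_pos_lt _ Hx) | pose proof (Rsqr_pos_lt _ Hy)];
      unfold Rsqr in *; lra. }
  assert (mxpow_app L m rs <= m rs * survival L rs).
  { apply Rle_trans with (mxpow_app L (fun c => m rs * 1) rs).
    - apply mxpow_app_le; auto. intros c Hc. rewrite Rmult_1_r. auto.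
    - rewrite mxpow_app_scal. unfold survival. lra. }
  pose proof (Hsub L rs Hrs). pose proof (survival_L_le rs Hrs). nra.
Qed.

End UniformDecay.

Definition survival_limit (r : nat) : R :=
  epsilon (inhabits 0) (fun l => Un_cv (fun t => survival t r) l).

Lemma survival_cv_limit r : (r < N)%nat -> Un_cv (fun t => survival t r) (survival_limit r).
Proof.
  intros Hr. unfold survival_limit. apply epsilon_spec.
  destruct (decreasing_cv (fun t => survival t r)) as [l Hl].
  - intros t. apply survival_succ_le; auto.
  - exists 0. intros z [t ->]. unfold opp_seq. pose proof (survival_nonneg t r Hr). lra.
  - exists l. exact Hl.
Qed.

(* [lim_t A^t 1] is a fixed vector of [A], nonzero at [r0]. *)
Lemma eigenvalue_1_of_no_decay r0 :
  (r0 < N)%nat -> (forall t, survival t r0 = 1) -> is_eigenvalue N A 1 0.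
Proof.
  intros Hr0 H1. exists survival_limit, (fun _ => 0). split.
  - exists r0. split; auto. left.
    rewrite (UL_sequence _ _ 1 (survival_cv_limit r0 Hr0)); [lra|].
    apply (Un_cv_ext (fun _ => 1)); [auto | apply Un_cv_const].
  - intros r Hr. split.
    2:{ rewrite (rsum_ext _ _ (fun _ => 0)) by (intros; ring). rewrite rsum_zero. ring. }
    rewrite (UL_sequence (fun t => survival (S t) r) _ (survival_limit r)).
    + ring.
    + apply Un_cv_rsum. intros c Hc.
      apply (CV_mult (fun _ => A r c)); [apply Un_cv_const | apply survival_cv_limit; auto].
    + apply (Un_cv_succ (fun t => survival t r)), survival_cv_limit; auto.
Qed.

End Substochastic.

(** * Walks on the product chain *)

Lemma pair_index_div_mod n a b :
  (b < n)%nat -> ((a * n + b) / n = a /\ (a * n + b) mod n = b)%nat.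
Proof.
  intros Hb. split.
  - symmetry. apply (Nat.div_unique _ _ _ b); auto. lia.
  - symmetry. apply (Nat.mod_unique _ _ a); auto. lia.
Qed.

Lemma pair_index_decomp n r :
  (r < n * n)%nat -> (r / n < n /\ r mod n < n /\ r = r / n * n + r mod n)%nat.
Proof.
  intros Hr. assert (Hn : n <> 0%nat) by (intros ->; simpl in Hr; lia).
  pose proof (Nat.div_mod r n Hn). pose proof (Nat.mod_upper_bound r n Hn).
  split; [nia | split; [auto | lia]].
Qed.

Lemma walk_one N P i k : (i < N)%nat -> (k < N)%nat -> 0 < P i k -> walk N P 1 i k.
Proof.
  intros Hi Hk Hp. exists (fun t => match t with O => i | S _ => k end).
  repeat split; auto.
  - intros [|t] Ht; auto.
  - intros t Ht. replace t with 0%nat by lia. auto.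
Qed.

Lemma walk_cons N P l i a b : (i < N)%nat -> 0 < P i a -> walk N P l a b -> walk N P (S l) i b.
Proof.
  intros Hi Hpa [s [H0 [Hl [Hb Hp]]]].
  exists (fun t => match t with O => i | S t' => s t' end). repeat split; auto.
  - intros [|t] Ht; auto. apply Hb. lia.
  - intros [|t] Ht; [now rewrite H0 | apply Hp; lia].
Qed.

Lemma walk_uncons N P l a b :
  walk N P (S l) a b -> exists a', (a' < N)%nat /\ 0 < P a a' /\ walk N P l a' b.
Proof.
  intros [s [H0 [Hl [Hb Hp]]]]. exists (s 1%nat). repeat split.
  - apply Hb. lia.
  - rewrite <- H0. apply Hp. lia.
  - exists (fun t => s (S t)). repeat split; auto.
    + intros t Ht. apply Hb. lia.
    + intros t Ht. apply Hp. lia.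
Qed.

Lemma kron_walk_of_walks n Pp Pe l i j k : (i < n)%nat -> (j < n)%nat ->
  walk n Pp l i k -> walk n Pe l j k -> walk (n * n) (kron n Pe Pp) l (j * n + i) (k * n + k).
Proof.
  intros Hi Hj [s1 [A1 [B1 [C1 D1]]]] [s2 [A2 [B2 [C2 D2]]]].
  exists (fun t => s2 t * n + s1 t)%nat. rewrite A1, A2, B1, B2. repeat split; auto.
  - intros t Ht. specialize (C1 t Ht). specialize (C2 t Ht). nia.
  - intros t Ht. unfold kron.
    destruct (pair_index_div_mod n (s2 t) (s1 t)) as [-> ->]; [apply C1; lia|].
    destruct (pair_index_div_mod n (s2 (S t)) (s1 (S t))) as [-> ->]; [apply C1; lia|].
    apply Rmult_lt_0_compat; auto.
Qed.

Lemma walks_of_kron_walk n Pp Pe l i j k : (i < n)%nat -> (j < n)%nat -> (k < n)%nat ->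
  row_stochastic n Pp -> row_stochastic n Pe ->
  walk (n * n) (kron n Pe Pp) l (j * n + i) (k * n + k) -> walk n Pp l i k /\ walk n Pe l j k.
Proof.
  intros Hi Hj Hk [Pp0 _] [Pe0 _] [s [A1 [B1 [C1 D1]]]].
  destruct (pair_index_div_mod n j i Hi) as [E1 E2].
  destruct (pair_index_div_mod n k k Hk) as [E3 E4].
  assert (Hb : forall t, (t <= l)%nat -> (s t / n < n /\ s t mod n < n)%nat)
    by (intros t Ht; destruct (pair_index_decomp n (s t)) as [X [Y _]]; auto).
  assert (Hp : forall t, (t < l)%nat ->
    0 < Pe (s t / n)%nat (s (S t) / n)%nat /\ 0 < Pp (s t mod n)%nat (s (S t) mod n)%nat).
  { intros t Ht. destruct (Hb t ltac:(lia)) as [X1 X2]. destruct (Hb (S t) ltac:(lia)) as [Y1 Y2].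
    pose proof (D1 t Ht) as Hkr. unfold kron in Hkr.
    pose proof (Pe0 _ _ X1 Y1). pose proof (Pp0 _ _ X2 Y2). split; nra. }
  split; [exists (fun t => s t mod n)%nat | exists (fun t => s t / n)%nat];
    rewrite A1, B1; repeat split; auto; intros t Ht; apply Hb || apply Hp; auto.
Qed.

(** * The meeting process *)

Section Meeting.

Variable n : nat.
Variables Pp Pe : nat -> nat -> R.
Hypothesis hPp : row_stochastic n Pp.
Hypothesis hPe : row_stochastic n Pe.

(* The pair chain killed when pursuer and evader coincide. *)
Definition KE : nat -> nat -> R := mxmul (n * n) (kron n Pe Pp) (Emat n).

Lemma KE_pair i j a b : (i < n)%nat -> (j < n)%nat -> (a < n)%nat -> (b < n)%nat ->
  KE (j * n + i) (a * n + b) = Pp i b * Pe j a * (if Nat.eqb b a then 0 else 1).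
Proof.
  intros Hi Hj Ha Hb. unfold KE, mxmul.
  rewrite (rsum_ext _ _ (fun k => kron n Pe Pp (j * n + i) k
      * (1 - (if Nat.eqb ((a * n + b) mod n) ((a * n + b) / n) then 1 else 0))
      * idmx k (a * n + b))).
  2:{ intros k _. unfold Emat, idmx. destruct (Nat.eqb_spec k (a * n + b)) as [->|]; ring. }
  rewrite rsum_idmx_r by nia. unfold kron.
  destruct (pair_index_div_mod n j i Hi) as [-> ->].
  destruct (pair_index_div_mod n a b Hb) as [-> ->].
  destruct (Nat.eqb b a); ring.
Qed.

Lemma KE_nonneg r c : (r < n * n)%nat -> (c < n * n)%nat -> 0 <= KE r c.
Proof.
  intros Hr Hc. destruct (pair_index_decomp n r Hr) as [R1 [R2 ->]].
  destruct (pair_index_decomp n c Hc) as [C1 [C2 ->]].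
  rewrite KE_pair by auto. destruct hPp as [Pp0 _], hPe as [Pe0 _].
  apply Rmult_le_pos; [apply Rmult_le_pos; auto | destruct (Nat.eqb _ _); lra].
Qed.

Lemma mxapp_KE_pair v i j : (i < n)%nat -> (j < n)%nat ->
  mxapp (n * n) KE v (j * n + i) =
  rsum n (fun k => rsum n (fun l =>
    Pp i k * Pe j l * (if Nat.eqb k l then 0 else v (l * n + k)%nat))).
Proof.
  intros Hi Hj. unfold mxapp. rewrite rsum_blocks, rsum_swap.
  apply rsum_ext. intros k Hk. apply rsum_ext. intros l Hl.
  rewrite KE_pair by auto. destruct (Nat.eqb k l); ring.
Qed.

Lemma rsum_pair_step i j : (i < n)%nat -> (j < n)%nat ->
  rsum n (fun k => rsum n (fun l => Pp i k * Pe j l)) = 1.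
Proof.
  intros Hi Hj. destruct hPp as [_ Pp1], hPe as [_ Pe1].
  rewrite (rsum_ext _ _ (fun k => Pp i k * rsum n (fun l => Pe j l)))
    by (intros; now rewrite rsum_scal_l).
  rewrite Pe1 by auto. rewrite rsum_scal_r, Pp1 by auto. ring.
Qed.

Lemma KE_rowsum_le1 r : (r < n * n)%nat -> rsum (n * n) (fun c => KE r c) <= 1.
Proof.
  intros Hr. destruct (pair_index_decomp n r Hr) as [R1 [R2 ->]].
  replace (rsum (n * n) _) with (mxapp (n * n) KE (fun _ => 1) (r / n * n + r mod n))
    by (apply rsum_ext; intros; ring).
  rewrite mxapp_KE_pair by auto.
  apply Rle_trans with (rsum n (fun k => rsum n (fun l => Pp (r mod n) k * Pe (r / n) l)));
    [|right; apply rsum_pair_step; auto].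
  destruct hPp as [Pp0 _], hPe as [Pe0 _].
  apply rsum_le. intros k Hk. apply rsum_le. intros l Hl.
  assert (0 <= Pp (r mod n) k * Pe (r / n) l) by (apply Rmult_le_pos; auto).
  destruct (Nat.eqb k l); nra.
Qed.

Notation g := (survival (n * n) KE).

Lemma g_bounds t i j : (i < n)%nat -> (j < n)%nat -> 0 <= g t (j * n + i) <= 1.
Proof.
  intros Hi Hj. split.
  - apply survival_nonneg; [apply KE_nonneg | nia].
  - apply survival_le1; [apply KE_nonneg | apply KE_rowsum_le1 | nia].
Qed.

Lemma meet_prob_succ_eq t i j :
  meet_prob n Pp Pe (S t) i j =
  rsum n (fun k => rsum n (fun l => Pp i k * Pe j l *
    (if Nat.eqb k l then (if Nat.eqb t O then 1 else 0) else meet_prob n Pp Pe t k l))).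
Proof. reflexivity. Qed.

(* Conditioning on the first step: [T = t + 1] has the probability that the
   killed chain survives [t] steps but not [t + 1]. *)
Lemma meet_prob_succ t i j : (i < n)%nat -> (j < n)%nat ->
  meet_prob n Pp Pe (S t) i j = g t (j * n + i) - g (S t) (j * n + i).
Proof.
  revert i j. induction t; intros i j Hi Hj;
    unfold survival; simpl mxpow_app; rewrite !mxapp_KE_pair by auto.
  - match goal with |- _ = 1 - ?X =>
      replace (1 - X) with (rsum n (fun k => rsum n (fun l => Pp i k * Pe j l)) - X)
        by (rewrite rsum_pair_step; auto) end.
    rewrite meet_prob_succ_eq.
    rewrite <- rsum_minus. apply rsum_ext. intros k Hk.
    rewrite <- rsum_minus. apply rsum_ext. intros l Hl. destruct (Nat.eqb k l); simpl; ring.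
  - rewrite meet_prob_succ_eq. rewrite <- rsum_minus. apply rsum_ext. intros k Hk.
    rewrite <- rsum_minus. apply rsum_ext. intros l Hl. rewrite (IHt k l Hk Hl).
    unfold survival. simpl mxpow_app. destruct (Nat.eqb k l); simpl; ring.
Qed.

Lemma meet_prob_partial_sum T i j : (i < n)%nat -> (j < n)%nat ->
  rsum (S T) (fun t => meet_prob n Pp Pe t i j) = 1 - g T (j * n + i).
Proof.
  intros Hi Hj. induction T.
  - simpl. unfold survival. simpl. lra.
  - change (rsum (S (S T)) _) with
      (rsum (S T) (fun t => meet_prob n Pp Pe t i j) + meet_prob n Pp Pe (S T) i j).
    rewrite IHT, meet_prob_succ by auto. ring.
Qed.

Lemma meet_prob_weighted_partial_sum T i j : (i < n)%nat -> (j < n)%nat ->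
  rsum (S T) (fun t => INR t * meet_prob n Pp Pe t i j)
  = rsum T (fun t => g t (j * n + i)) - INR T * g T (j * n + i).
Proof.
  intros Hi Hj. induction T; [simpl; lra|].
  change (rsum (S (S T)) _) with
    (rsum (S T) (fun t => INR t * meet_prob n Pp Pe t i j)
     + INR (S T) * meet_prob n Pp Pe (S T) i j).
  rewrite IHT, meet_prob_succ by auto. simpl rsum. rewrite S_INR. ring.
Qed.

Lemma walks_of_meet_prob_neq0 t i j : (i < n)%nat -> (j < n)%nat ->
  meet_prob n Pp Pe t i j <> 0 ->
  exists k, (k < n)%nat /\ (1 <= t)%nat /\ walk n Pp t i k /\ walk n Pe t j k.
Proof.
  revert i j. induction t as [|t IH]; intros i j Hi Hj H; [simpl in H; lra|].
  rewrite meet_prob_succ_eq in H.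
  destruct (rsum_nonzero_term _ _ H) as [k [Hk Hk']].
  destruct (rsum_nonzero_term _ _ Hk') as [l [Hl Hkl]].
  destruct hPp as [Pp0 _], hPe as [Pe0 _].
  assert (Hik : 0 < Pp i k).
  { destruct (Pp0 i k Hi Hk) as [|E]; auto. rewrite <- E in Hkl. lra. }
  assert (Hjl : 0 < Pe j l).
  { destruct (Pe0 j l Hj Hl) as [|E]; auto. rewrite <- E in Hkl. lra. }
  destruct (Nat.eqb_spec k l) as [<-|Hne].
  - destruct (Nat.eqb_spec t 0) as [->|]; [|lra].
    exists k. repeat split; auto; apply walk_one; auto.
  - assert (meet_prob n Pp Pe t k l <> 0) by (intros E; rewrite E in Hkl; lra).
    destruct (IH k l Hk Hl H0) as [m [Hm [Ht [W1 W2]]]].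
    exists m. split; [auto|]. split; [lia|].
    split; eapply walk_cons; eauto.
Qed.

Lemma meet_prob_eq0_of_no_walks i j : (i < n)%nat -> (j < n)%nat ->
  ~ (exists k l, (k < n)%nat /\ (1 <= l)%nat /\ walk n Pp l i k /\ walk n Pe l j k) ->
  forall t, meet_prob n Pp Pe t i j = 0.
Proof.
  intros Hi Hj Hno t. apply NNPP. intros Hneq. apply Hno.
  destruct (walks_of_meet_prob_neq0 t i j Hi Hj Hneq) as [k [Hk [Ht [W1 W2]]]].
  exists k, t. auto.
Qed.

Lemma g_succ_lt1 t i j k l : (i < n)%nat -> (j < n)%nat -> (k < n)%nat -> (l < n)%nat ->
  0 < Pp i k -> 0 < Pe j l -> (k = l \/ g t (l * n + k) < 1) ->
  g (S t) (j * n + i) < 1.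
Proof.
  intros Hi Hj Hk Hl Hik Hjl Hstep.
  unfold survival. simpl mxpow_app. fold (g t). rewrite mxapp_KE_pair by auto.
  rewrite <- (rsum_pair_step i j) by auto.
  destruct hPp as [Pp0 _], hPe as [Pe0 _].
  assert (Hterm : forall k' l', (k' < n)%nat -> (l' < n)%nat ->
    Pp i k' * Pe j l' * (if Nat.eqb k' l' then 0 else g t (l' * n + k')) <= Pp i k' * Pe j l').
  { intros k' l' Hk' Hl'. pose proof (g_bounds t k' l' Hk' Hl').
    assert (0 <= Pp i k' * Pe j l') by (apply Rmult_le_pos; auto).
    destruct (Nat.eqb k' l'); nra. }
  apply (rsum_lt _ _ _ k); auto.
  - intros k' Hk'. apply rsum_le. auto.
  - apply (rsum_lt _ _ _ l); auto.
    assert (0 < Pp i k * Pe j l) by (apply Rmult_lt_0_compat; auto).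
    destruct (Nat.eqb_spec k l) as [<-|Hne]; [nra|].
    destruct Hstep as [|Hlt]; [contradiction | nra].
Qed.

Lemma g_lt1_of_walks l i j k : (i < n)%nat -> (j < n)%nat -> (1 <= l)%nat ->
  walk n Pp l i k -> walk n Pe l j k -> g l (j * n + i) < 1.
Proof.
  revert i j. induction l as [|l IH]; intros i j Hi Hj Hl W1 W2; [lia|].
  destruct (walk_uncons _ _ _ _ _ W1) as [k1 [Hk1 [Pk1 W1']]].
  destruct (walk_uncons _ _ _ _ _ W2) as [l1 [Hl1 [Pl1 W2']]].
  apply (g_succ_lt1 l i j k1 l1); auto.
  destruct l as [|l].
  - left. destruct W1' as [s1 [A1 [B1 _]]], W2' as [s2 [A2 [B2 _]]]. congruence.
  - right. apply (IH k1 l1); auto. lia.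
Qed.

Lemma uniform_decay_of_walks :
  (forall i j, (i < n)%nat -> (j < n)%nat ->
     exists k l, (k < n)%nat /\ (1 <= l)%nat /\ walk n Pp l i k /\ walk n Pe l j k) ->
  exists L q, 0 <= q < 1 /\ forall r, (r < n * n)%nat -> g L r <= q.
Proof.
  intros Hw. apply uniform_decay_of_decay; [apply KE_nonneg | apply KE_rowsum_le1|].
  intros r Hr. destruct (pair_index_decomp n r Hr) as [R1 [R2 ->]].
  destruct (Hw (r mod n) (r / n))%nat as [k [l [Hk [Hl [W1 W2]]]]]; auto.
  exists l. apply (g_lt1_of_walks l _ _ k); auto.
Qed.

(* The weighted partial sums telescope to [sum_{t<T} g t - T g T], and
   [T g T -> 0] because [g] is nonincreasing and summable. *)
Lemma meeting_time_is_neumann_rowsum L q :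
  0 <= q < 1 -> (forall r, (r < n * n)%nat -> g L r <= q) ->
  forall i j, (i < n)%nat -> (j < n)%nat ->
  meeting_time_is n Pp Pe i j (rsum (n * n) (fun c => neumann (n * n) KE (j * n + i) c)).
Proof.
  intros Hq HL i j Hi Hj.
  pose proof KE_nonneg as A0. pose proof KE_rowsum_le1 as A1.
  assert (Hr : (j * n + i < n * n)%nat) by nia.
  split; unfold infinite_sum.
  - apply (Un_cv_ext (fun T => 1 - g T (j * n + i))).
    + intros T. now rewrite sum_f_R0_rsum, meet_prob_partial_sum.
    + pose proof (CV_minus _ _ _ _ (Un_cv_const 1) (survival_cv_0 _ _ A0 A1 L q Hq HL _ Hr)) as Hc.
      now rewrite Rminus_0_r in Hc.
  - pose proof (survival_sums_neumann_rowsum _ _ A0 A1 L q Hq HL _ Hr) as Hs.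
    apply (Un_cv_ext (fun T => rsum T (fun t => g t (j * n + i)) - INR T * g T (j * n + i))).
    + intros T. now rewrite sum_f_R0_rsum, meet_prob_weighted_partial_sum.
    + assert (Hw : Un_cv (fun T => INR T * g T (j * n + i)) 0).
      { refine (Un_cv_INR_mult_0 _ _ _ _ Hs); intros;
          [apply survival_nonneg | apply survival_succ_le]; auto. }
      pose proof (CV_minus _ _ _ _ Hs Hw) as Hc. now rewrite Rminus_0_r in Hc.
Qed.

Lemma g_eq1_of_no_walks i j : (i < n)%nat -> (j < n)%nat ->
  ~ (exists k l, (k < n)%nat /\ (1 <= l)%nat /\ walk n Pp l i k /\ walk n Pe l j k) ->
  forall t, g t (j * n + i) = 1.
Proof.
  intros Hi Hj Hno t. pose proof (meet_prob_partial_sum t i j Hi Hj) as E.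
  rewrite (rsum_ext _ _ (fun _ => 0)) in E
    by (intros; apply meet_prob_eq0_of_no_walks; auto).
  rewrite rsum_zero in E. lra.
Qed.

Lemma walks_of_meet_prob_infinite_sum i j : (i < n)%nat -> (j < n)%nat ->
  infinite_sum (fun t => meet_prob n Pp Pe t i j) 1 ->
  exists k l, (k < n)%nat /\ (1 <= l)%nat /\ walk n Pp l i k /\ walk n Pe l j k.
Proof.
  intros Hi Hj Hs. apply NNPP. intros Hno.
  assert (H0 : infinite_sum (fun t => meet_prob n Pp Pe t i j) 0).
  { apply (Un_cv_ext (fun _ => 0)); [|apply Un_cv_const].
    intros T. rewrite sum_f_R0_rsum, meet_prob_partial_sum, g_eq1_of_no_walks; auto. ring. }
  pose proof (UL_sequence _ _ _ Hs H0). lra.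
Qed.

Lemma walks_of_spectral_radius_lt_1 i j : (i < n)%nat -> (j < n)%nat ->
  spectral_radius_lt_1 (n * n) KE ->
  exists k l, (k < n)%nat /\ (1 <= l)%nat /\ walk n Pp l i k /\ walk n Pe l j k.
Proof.
  intros Hi Hj Hrho. apply NNPP. intros Hno.
  assert (He : is_eigenvalue (n * n) KE 1 0).
  { apply (eigenvalue_1_of_no_decay _ _ KE_nonneg KE_rowsum_le1 (j * n + i)); [nia|].
    exact (g_eq1_of_no_walks i j Hi Hj Hno). }
  specialize (Hrho 1 0 He). rewrite Rmult_0_l, Rplus_0_r, Rmult_1_l, sqrt_1 in Hrho. lra.
Qed.

End Meeting.

Theorem theorem1 (n : nat) (Pp Pe : nat -> nat -> R)
  (hPp : row_stochastic n Pp) (hPe : row_stochastic n Pe) :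
  let K := kron n Pe Pp in
  let KE := mxmul (n * n) K (Emat n) in
  let C1 := forall i j, (i < n)%nat -> (j < n)%nat ->
              meeting_time_finite n Pp Pe i j in
  let C2 := forall i j, (i < n)%nat -> (j < n)%nat ->
              exists k l, (k < n)%nat /\ (1 <= l)%nat /\
                walk n Pp l i k /\ walk n Pe l j k in
  let C3 := forall i j, (i < n)%nat -> (j < n)%nat ->
              exists k l, (k < n)%nat /\ (1 <= l)%nat /\
                walk (n * n) K l (j * n + i)%nat (k * n + k)%nat in
  let C4 := spectral_radius_lt_1 (n * n) KE in
  ((C1 <-> C2) /\ (C2 <-> C3) /\ (C3 <-> C4)) /\
  (C1 ->
     exists B, is_inverse (n * n) B (mxsub idmx KE) /\
       forall i j, (i < n)%nat -> (j < n)%nat ->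
         meeting_time_is n Pp Pe i j
           (rsum (n * n) (fun c => B (j * n + i)%nat c))).
Proof.
  intros K KE0 C1 C2 C3 C4.
  pose proof (KE_nonneg n Pp Pe hPp hPe) as A0. pose proof (KE_rowsum_le1 n Pp Pe hPp hPe) as A1.
  assert (H21 : C2 -> C1).
  { intros H2 i j Hi Hj.
    destruct (uniform_decay_of_walks n Pp Pe hPp hPe H2) as [L [q [Hq HL]]].
    destruct (meeting_time_is_neumann_rowsum n Pp Pe hPp hPe L q Hq HL i j Hi Hj) as [F1 F2].
    split; [exact F1 | eexists; exact F2]. }
  assert (H12 : C1 -> C2)
    by (intros H1 i j Hi Hj; apply walks_of_meet_prob_infinite_sum, H1; auto).
  assert (H23 : C2 <-> C3).
  { split; intros H i j Hi Hj; destruct (H i j Hi Hj) as [k [l [Hk [Hl W]]]];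
      exists k, l; split; auto; split; auto.
    - destruct W as [W1 W2]. now apply kron_walk_of_walks.
    - now apply (walks_of_kron_walk n Pp Pe l i j k). }
  assert (H24 : C2 -> C4).
  { intros H2. destruct (uniform_decay_of_walks n Pp Pe hPp hPe H2) as [L [q [Hq HL]]].
    exact (spectral_radius_lt_1_of_decay _ _ A0 A1 L q Hq HL). }
  assert (H42 : C4 -> C2)
    by (intros H4 i j Hi Hj; apply walks_of_spectral_radius_lt_1; auto).
  split; [tauto|].
  intros H1. destruct (uniform_decay_of_walks n Pp Pe hPp hPe (H12 H1)) as [L [q [Hq HL]]].
  exists (neumann (n * n) (KE n Pp Pe)). split.
  - exact (neumann_inverse _ _ A0 A1 L q Hq HL).
  - exact (meeting_time_is_neumann_rowsum n Pp Pe hPp hPe L q Hq HL).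
Qed.
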